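(* Let $N_o>0$, $\alpha>0$, $\beta>0$ and $\eta(d)=\frac{1}{(1+d)^\alpha}$. If $C,D>0$ satisfy $$(1+C)^\alpha\sum_{k=1}^{\infty}\frac{6k+3}{(1+kC(1+D/2))^\alpha}<\frac1\beta,$$ then $(C,D)$ ensures the SINR$_\beta$ criterion under this propagation model.
   Context: $\mathrm{SINR}(t,r,T,P,N_o,\eta)=\dfrac{P\eta(\|t-r\|)}{N_o+\sum_{t'\in T}P\eta(\|t'-r\|)}$ for $t,r\in\mathbb{R}^2$, $T$ a finite subset of $\mathbb{R}^2$, $P>0$. $(t,r,T)$ satisfies DC$(C,D)$ if $\|t-r\|\le C$ and $\|t'-t''\|\ge C(2+D)$ for all distinct $t',t''\in T\cup\{t\}$. The pair $(C,D)$ ensures the SINR$_\beta$ criterion (given $N_o$ and $\eta$) if there exists $P>0$ such that every triple $(t,r,T)$ satisfying DC$(C,D)$ has $\mathrm{SINR}(t,r,T,P,N_o,\eta)\ge\beta$. *)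

From Stdlib Require Import Reals List.
From Coquelicot Require Import Coquelicot.
Import ListNotations.
Open Scope R_scope.

Definition pt := (R * R)%type.
Definition dist2 (p q : pt) : R :=
  sqrt ((fst p - fst q) ^ 2 + (snd p - snd q) ^ 2).

(* Sum of f over a finite set represented by a duplicate-free list. *)
Definition lsum (f : pt -> R) (T : list pt) : R :=
  fold_right (fun x acc => f x + acc) 0 T.

Definition SINR (t r : pt) (T : list pt) (P No : R) (eta : R -> R) : R :=
  P * eta (dist2 t r) / (No + lsum (fun t' => P * eta (dist2 t' r)) T).

(* (t,r,T) satisfies DC(C,D).  T is a finite set of (other) transmitters:
   a duplicate-free list not containing t. *)
Definition DC (C D : R) (t r : pt) (T : list pt) : Prop :=
  NoDup T /\ ~ In t T /\
  dist2 t r <= C /\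
  (forall t' t'', In t' (t :: T) -> In t'' (t :: T) -> t' <> t'' ->
     C * (2 + D) <= dist2 t' t'').

Definition ensures_SINR (beta No : R) (eta : R -> R) (C D : R) : Prop :=
  exists P : R, 0 < P /\
    forall (t r : pt) (T : list pt), DC C D t r T -> beta <= SINR t r T P No eta.

Definition eta_pow (alpha : R) (d : R) : R := / Rpower (1 + d) alpha.

From Stdlib Require Import Reals List Lra Psatz Wellfounded.
From Coquelicot Require Import Coquelicot.
Open Scope R_scope.

(* With a = C (1 + D/2), the transmitter t and its interferers are centres of pairwise
   disjoint disks of radius a, and every interferer is at distance at least a from r.
   Comparing areas (by integrating lengths of vertical chords) shows that at most
   3k^2 + 6k interferers lie within distance (k+1) a of r.  As 3k^2 + 6k is the sum of
   the weights 6j + 3 for j = 1..k, summation by parts against the decreasing attenuation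
   bounds the interference sum of eta over the interferers by the series s.  Since
   eta(C) (1 + C)^alpha = 1, the hypothesis says beta s < eta(C) <= eta(|t - r|), and a
   large enough power P absorbs the noise. *)

Lemma sqrt_sum_sq_triangle (x1 y1 x2 y2 : R) :
  sqrt ((x1 + x2)^2 + (y1 + y2)^2) <= sqrt (x1^2 + y1^2) + sqrt (x2^2 + y2^2).
Proof.
  set (B := x1^2 + y1^2); set (B' := x2^2 + y2^2).
  assert (HB : 0 <= B) by (unfold B; nra).
  assert (HB' : 0 <= B') by (unfold B'; nra).
  pose proof (sqrt_pos B); pose proof (sqrt_pos B').
  pose proof (sqrt_sqrt B HB); pose proof (sqrt_sqrt B' HB').
  assert (Hcs : x1 * x2 + y1 * y2 <= sqrt B * sqrt B').
  { assert ((x1 * x2 + y1 * y2)^2 <= (sqrt B * sqrt B')^2).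
    { replace ((sqrt B * sqrt B')^2) with (B * B') by (rewrite Rpow_mult_distr; simpl; nra).
      unfold B, B'; pose proof (pow2_ge_0 (x1 * y2 - x2 * y1)); nra. }
    pose proof (Rmult_le_pos _ _ H H0); nra. }
  rewrite <- (sqrt_square (sqrt B + sqrt B')) by lra.
  apply sqrt_le_1_alt; unfold B, B' in *; nra.
Qed.

Lemma dist2_triangle (p q z : pt) : dist2 p z <= dist2 p q + dist2 q z.
Proof.
  unfold dist2.
  replace (fst p - fst z) with ((fst p - fst q) + (fst q - fst z)) by ring.
  replace (snd p - snd z) with ((snd p - snd q) + (snd q - snd z)) by ring.
  apply sqrt_sum_sq_triangle.
Qed.

Lemma dist2_sym (p q : pt) : dist2 p q = dist2 q p.
Proof. unfold dist2; f_equal; ring. Qed.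

Lemma Rabs_fst_le_dist2 (p q : pt) : Rabs (fst p - fst q) <= dist2 p q.
Proof.
  unfold dist2; rewrite <- sqrt_Rsqr_abs; apply sqrt_le_1_alt; unfold Rsqr.
  pose proof (pow2_ge_0 (snd p - snd q)); simpl; lra.
Qed.

Lemma dist2_lt_of_sq (p : pt) (x y a : R) : 0 <= a ->
  (x - fst p)^2 + (y - snd p)^2 < a^2 -> dist2 (x, y) p < a.
Proof.
  intros Ha H; unfold dist2; cbn [fst snd].
  rewrite <- (sqrt_pow2 a Ha); apply sqrt_lt_1_alt.
  pose proof (pow2_ge_0 (x - fst p)); pose proof (pow2_ge_0 (y - snd p)); lra.
Qed.

Lemma sq_le_of_dist2_le (p : pt) (x y a : R) :
  dist2 (x, y) p <= a -> (x - fst p)^2 + (y - snd p)^2 <= a^2.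
Proof.
  unfold dist2; cbn [fst snd]; intros H.
  assert (Hu : 0 <= (x - fst p)^2 + (y - snd p)^2)
    by (pose proof (pow2_ge_0 (x - fst p)); pose proof (pow2_ge_0 (y - snd p)); lra).
  rewrite <- (pow2_sqrt _ Hu); apply pow_incr; split; [apply sqrt_pos | exact H].
Qed.

Lemma lsum_ext (f g : pt -> R) (l : list pt) :
  (forall p, In p l -> f p = g p) -> lsum f l = lsum g l.
Proof.
  induction l as [|p l IH]; intros H; simpl; [reflexivity|].
  rewrite (H p (in_eq p l)), IH; [reflexivity |].
  intros q Hq; apply H, in_cons, Hq.
Qed.

Lemma lsum_le (f g : pt -> R) (l : list pt) :
  (forall p, In p l -> f p <= g p) -> lsum f l <= lsum g l.
Proof.
  induction l as [|p l IH]; intros H; simpl; [lra|].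
  pose proof (H p (in_eq p l)); pose proof (IH (fun q Hq => H q (in_cons p q l Hq))); lra.
Qed.

Lemma lsum_ge0 (f : pt -> R) (l : list pt) : (forall p, In p l -> 0 <= f p) -> 0 <= lsum f l.
Proof.
  induction l as [|p l IH]; intros H; simpl; [lra|].
  pose proof (H p (in_eq p l)); pose proof (IH (fun q Hq => H q (in_cons p q l Hq))); lra.
Qed.

Lemma lsum_plus (f g : pt -> R) (l : list pt) :
  lsum (fun p => f p + g p) l = lsum f l + lsum g l.
Proof. induction l as [|p l IH]; simpl; [ring | rewrite IH; ring]. Qed.

Lemma lsum_scal (c : R) (f : pt -> R) (l : list pt) :
  lsum (fun p => c * f p) l = c * lsum f l.
Proof. induction l as [|p l IH]; simpl; [ring | rewrite IH; ring]. Qed.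

Lemma lsum_const (c : R) (l : list pt) : lsum (fun _ => c) l = INR (length l) * c.
Proof.
  induction l as [|p l IH]; simpl lsum; simpl length; [simpl; ring | rewrite IH, S_INR; ring].
Qed.

Lemma lsum_indicator (b : pt -> bool) (l : list pt) :
  lsum (fun p => if b p then 1 else 0) l = INR (length (filter b l)).
Proof.
  induction l as [|p l IH]; simpl; [reflexivity|].
  rewrite IH; destruct (b p); simpl length; try rewrite S_INR; ring.
Qed.

Lemma lsum_sum_n (F : nat -> pt -> R) (N : nat) (l : list pt) :
  lsum (fun p => sum_n (fun n => F n p) N) l = sum_n (fun n => lsum (F n) l) N.
Proof.
  induction N as [|N IH].
  - rewrite sum_O; apply lsum_ext; intros; apply sum_O.
  - rewrite sum_Sn, <- IH, <- lsum_plus.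
    apply lsum_ext; intros; rewrite sum_Sn; reflexivity.
Qed.

Lemma lsum_filter_partition (g : pt -> R) (P Q : pt -> bool) (l : list pt) :
  (forall p, In p l -> P p = true -> Q p = true -> False) ->
  (forall p, In p l -> P p = false -> Q p = false -> g p = 0) ->
  lsum g l = lsum g (filter P l) + lsum g (filter Q l).
Proof.
  induction l as [|p l IH]; intros HPQ Hg; simpl; [lra|].
  rewrite IH by (intros; eauto using in_cons).
  destruct (P p) eqn:EP, (Q p) eqn:EQ; simpl.
  - exfalso; eapply HPQ; eauto using in_eq.
  - lra.
  - lra.
  - rewrite (Hg p); [lra | apply in_eq | auto | auto].
Qed.

Definition Rltb (x y : R) : bool := if Rlt_dec x y then true else false.

Lemma Rltb_spec (x y : R) : Bool.reflect (x < y) (Rltb x y).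
Proof. unfold Rltb; destruct (Rlt_dec x y); constructor; assumption. Qed.

Lemma lsum_disjoint_intervals_le (lo hi : pt -> R) (l : list pt) (L U : R) :
  NoDup l -> (forall p, In p l -> lo p <= hi p) ->
  (forall p, In p l -> lo p < hi p -> L <= lo p /\ hi p <= U) ->
  (forall p q, In p l -> In q l -> p <> q -> lo p < hi p -> lo q < hi q ->
     hi p <= lo q \/ hi q <= lo p) ->
  L <= U -> lsum (fun p => hi p - lo p) l <= U - L.
Proof.
  revert L U.
  induction l as [l IH]
    using (well_founded_ind (wf_inverse_image _ nat lt (@length pt) Wf_nat.lt_wf)).
  intros L U Hnd Hle Hin Hdis HLU.
  destruct l as [|h rest]; simpl; [lra|].
  apply NoDup_cons_iff in Hnd as [Hh Hnd].
  assert (IHf : forall b L' U', L' <= U' ->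
    (forall p, In p rest -> b p = true -> lo p < hi p -> L' <= lo p /\ hi p <= U') ->
    lsum (fun p => hi p - lo p) (filter b rest) <= U' - L').
  { intros b L' U' HLU' Hin'.
    apply IH; auto using NoDup_filter.
    - simpl; pose proof (filter_length_le b rest); lia.
    - intros p Hp; apply filter_In in Hp; apply Hle; simpl; tauto.
    - intros p Hp; apply filter_In in Hp; apply Hin'; tauto.
    - intros p q Hp Hq; apply filter_In in Hp; apply filter_In in Hq; apply Hdis; simpl; tauto. }
  destruct (Rle_lt_or_eq_dec _ _ (Hle h (in_eq h rest))) as [Hlt|Heq].
  - pose proof (Hin h (in_eq h rest) Hlt) as [HLh HhU].
    rewrite (lsum_filter_partition _ (fun p => negb (Rltb (lo h) (hi p)))
                                     (fun p => negb (Rltb (lo p) (hi h)))).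
    + enough (lsum (fun p => hi p - lo p) (filter (fun p => negb (Rltb (lo h) (hi p))) rest)
                <= lo h - L /\
              lsum (fun p => hi p - lo p) (filter (fun p => negb (Rltb (lo p) (hi h))) rest)
                <= U - hi h) by lra.
      split; [apply (IHf _ L (lo h) HLh) | apply (IHf _ (hi h) U HhU)]; intros p Hp Hb Hp';
        destruct (Rltb_spec (lo h) (hi p)); destruct (Rltb_spec (lo p) (hi h));
        try discriminate; pose proof (Hin p (in_cons h p rest Hp) Hp'); lra.
    + intros p Hp; destruct (Rltb_spec (lo h) (hi p)), (Rltb_spec (lo p) (hi h));
        try discriminate; pose proof (Hle p (in_cons h p rest Hp)); lra.
    + intros p Hp; destruct (Rltb_spec (lo h) (hi p)), (Rltb_spec (lo p) (hi h));
        try discriminate; intros _ _.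
      destruct (Rle_lt_or_eq_dec _ _ (Hle p (in_cons h p rest Hp))) as [Hp'|Hp']; [|lra].
      assert (p <> h) by (intros ->; contradiction).
      destruct (Hdis p h (in_cons h p rest Hp) (in_eq h rest) H Hp' Hlt); lra.
  - assert (lsum (fun p => hi p - lo p) rest <= U - L); [|lra].
    apply IH; auto.
    + intros p Hp; apply Hle, in_cons, Hp.
    + intros p Hp; apply Hin, in_cons, Hp.
    + intros p q Hp Hq; apply Hdis; apply in_cons; assumption.
Qed.

Definition chord (a u : R) : R := sqrt (a^2 - u^2).

Lemma chord_ge0 (a u : R) : 0 <= chord a u.
Proof. apply sqrt_pos. Qed.

Lemma chord_pos_sq_lt (a u : R) : 0 < chord a u -> u^2 < a^2.
Proof.
  unfold chord; intros H.
  destruct (Rlt_or_le 0 (a^2 - u^2)) as [Hpos|Hneg]; [lra|].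
  rewrite (sqrt_neg_0 _ Hneg) in H; lra.
Qed.

Lemma chord_sq (a u : R) : u^2 <= a^2 -> chord a u ^ 2 = a^2 - u^2.
Proof. intros H; unfold chord; apply pow2_sqrt; lra. Qed.

Lemma chord_scale (a u : R) : 0 < a -> chord a u = a * chord 1 (u / a).
Proof.
  intros Ha; unfold chord.
  replace (a^2 - u^2) with (a^2 * (1^2 - (u / a)^2)) by (field; lra).
  rewrite sqrt_mult_alt by nra; rewrite sqrt_pow2 by lra; reflexivity.
Qed.

Lemma chord_out (u : R) : 1 <= Rabs u -> chord 1 u = 0.
Proof.
  intros H; apply sqrt_neg_0.
  rewrite <- (pow2_abs u); nra.
Qed.

(* For a fixed abscissa [x], the vertical chords of the disjoint disks B(p, a) are disjoint
   subintervals of the chord of B(r, rho + a). *)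
Lemma sum_chords_le (a rho : R) (Q : list pt) (r : pt) (x : R) :
  0 < a -> 0 <= rho -> NoDup Q ->
  (forall p q, In p Q -> In q Q -> p <> q -> 2 * a <= dist2 p q) ->
  (forall p, In p Q -> dist2 p r <= rho) ->
  lsum (fun p => chord a (x - fst p)) Q <= chord (rho + a) (x - fst r).
Proof.
  intros Ha Hrho Hnd Hsep Hin.
  set (W := chord (rho + a) (x - fst r)).
  set (lo := fun p : pt => snd p - chord a (x - fst p)).
  set (hi := fun p : pt => snd p + chord a (x - fst p)).
  assert (Hchord : forall p, lo p < hi p -> 0 < chord a (x - fst p))
    by (intros p; unfold lo, hi; lra).
  enough (lsum (fun p => hi p - lo p) Q <= (snd r + W) - (snd r - W)) by
    (rewrite (lsum_ext _ (fun p => 2 * chord a (x - fst p))), lsum_scal in * by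
       (intros; unfold hi, lo; ring); lra).
  apply lsum_disjoint_intervals_le; auto.
  - intros p _; unfold lo, hi; pose proof (chord_ge0 a (x - fst p)); lra.
  - intros p Hp Hlt.
    set (c := chord a (x - fst p)).
    assert (Hc : c ^ 2 = a^2 - (x - fst p)^2)
      by exact (chord_sq _ _ (Rlt_le _ _ (chord_pos_sq_lt _ _ (Hchord p Hlt)))).
    assert (Hend : forall y, (y - snd p)^2 = c^2 ->
                     (x - fst r)^2 + (y - snd r)^2 <= (rho + a)^2).
    { intros y Hy; apply sq_le_of_dist2_le.
      assert (dist2 (x, y) p <= a).
      { unfold dist2; cbn [fst snd]; rewrite Hy, Hc.
        replace ((x - fst p)^2 + (a^2 - (x - fst p)^2)) with (a^2) by ring.
        rewrite sqrt_pow2; lra. }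
      pose proof (dist2_triangle (x, y) p r); pose proof (Hin p Hp); lra. }
    pose proof (Hend (snd p + c) ltac:(ring)) as Htop.
    pose proof (Hend (snd p - c) ltac:(ring)) as Hbot.
    assert (HW : W ^ 2 = (rho + a)^2 - (x - fst r)^2)
      by (apply chord_sq; pose proof (pow2_ge_0 (snd p + c - snd r)); lra).
    assert (0 <= W) by apply chord_ge0.
    unfold lo, hi; fold c; split; nra.
  - intros p q Hp Hq Hpq Hp' Hq'.
    destruct (Rle_or_lt (hi p) (lo q)) as [H|H1]; [left; auto|].
    destruct (Rle_or_lt (hi q) (lo p)) as [H|H2]; [right; auto|].
    exfalso.
    set (y := (Rmax (lo p) (lo q) + Rmin (hi p) (hi q)) / 2).
    assert (Hy : lo p < y < hi p /\ lo q < y < hi q).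
    { unfold y, Rmax, Rmin.
      destruct (Rle_dec (lo p) (lo q)), (Rle_dec (hi p) (hi q)); lra. }
    assert (Hnear : forall z, lo z < y < hi z -> dist2 (x, y) z < a).
    { intros z Hz.
      pose proof (chord_sq _ _ (Rlt_le _ _ (chord_pos_sq_lt _ _ (Hchord z ltac:(lra))))).
      apply dist2_lt_of_sq; [lra|]; unfold lo, hi in Hz.
      assert ((y - snd z)^2 < chord a (x - fst z) ^ 2) by nra; lra. }
    pose proof (Hnear p (proj1 Hy)); pose proof (Hnear q (proj2 Hy)).
    pose proof (dist2_triangle p (x, y) q); rewrite (dist2_sym p (x, y)) in *.
    pose proof (Hsep p q Hp Hq Hpq); lra.
  - assert (0 <= W) by apply chord_ge0; lra.
Qed.

Lemma continuous_chord (a x : R) : continuous (chord a) x.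
Proof.
  unfold chord; apply continuous_sqrt_comp.
  apply (ex_derive_continuous (K := R_AbsRing) (V := R_NormedModule)); auto_derive; auto.
Qed.

Lemma ex_RInt_chord_shift (a c A B : R) : ex_RInt (fun x => chord a (x - c)) A B.
Proof.
  apply (ex_RInt_continuous (V := R_CompleteNormedModule)); intros x _.
  apply (continuous_comp (fun x => x - c) (chord a)); [|apply continuous_chord].
  apply (ex_derive_continuous (K := R_AbsRing) (V := R_NormedModule)); auto_derive; auto.
Qed.

Lemma ex_RInt_chord (a A B : R) : ex_RInt (chord a) A B.
Proof.
  apply (ex_RInt_continuous (V := R_CompleteNormedModule)); intros; apply continuous_chord.
Qed.

Definition half_unit_disk_area : R := RInt (chord 1) (-1) 1.

Lemma half_unit_disk_area_pos : 0 < half_unit_disk_area.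
Proof.
  unfold half_unit_disk_area.
  rewrite <- (RInt_Chasles (chord 1) (-1) (-1/2) 1) by apply ex_RInt_chord.
  rewrite <- (RInt_Chasles (chord 1) (-1/2) (1/2) 1) by apply ex_RInt_chord.
  assert (0 <= RInt (chord 1) (-1) (-1/2))
    by (apply RInt_ge_0; [lra | apply ex_RInt_chord | intros; apply chord_ge0]).
  assert (0 <= RInt (chord 1) (1/2) 1)
    by (apply RInt_ge_0; [lra | apply ex_RInt_chord | intros; apply chord_ge0]).
  assert (RInt (fun _ => 1/2) (-1/2) (1/2) <= RInt (chord 1) (-1/2) (1/2)).
  { apply RInt_le; [lra | apply ex_RInt_const | apply ex_RInt_chord |].
    intros u Hu; unfold chord.
    rewrite <- (sqrt_pow2 (1/2)) by lra; apply sqrt_le_1_alt; nra. }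
  rewrite RInt_const in H1; change (scal (1/2 - -1/2) (1/2)) with ((1/2 - -1/2) * (1/2)) in H1.
  change (RInt (chord 1) (-1) (-1/2) + (RInt (chord 1) (-1/2) (1/2) + RInt (chord 1) (1/2) 1) > 0).
  lra.
Qed.

Lemma RInt_chord_unit_out (m M : R) : m <= M -> M <= -1 \/ 1 <= m -> RInt (chord 1) m M = 0.
Proof.
  intros Hm H.
  rewrite (RInt_ext _ (fun _ => 0)).
  - rewrite RInt_const; change ((M - m) * 0 = 0); ring.
  - intros u Hu; rewrite Rmin_left, Rmax_right in Hu by lra.
    apply chord_out; destruct H; [rewrite Rabs_left | rewrite Rabs_right]; lra.
Qed.

Lemma RInt_chord_unit (m M : R) : m <= -1 -> 1 <= M -> RInt (chord 1) m M = half_unit_disk_area.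
Proof.
  intros Hm HM; unfold half_unit_disk_area.
  rewrite <- (RInt_Chasles (chord 1) m (-1) M) by apply ex_RInt_chord.
  rewrite <- (RInt_Chasles (chord 1) (-1) 1 M) by apply ex_RInt_chord.
  rewrite (RInt_chord_unit_out m (-1)), (RInt_chord_unit_out 1 M) by lra.
  change (0 + (RInt (chord 1) (-1) 1 + 0) = RInt (chord 1) (-1) 1); ring.
Qed.

Lemma RInt_chord_shift (a c A B : R) : 0 < a -> A <= c - a -> c + a <= B ->
  RInt (fun x => chord a (x - c)) A B = a^2 * half_unit_disk_area.
Proof.
  intros Ha HA HB.
  rewrite (RInt_ext _ (fun x => scal (a^2) (scal (/ a) (chord 1 (/ a * x + - c / a))))).
  2:{ intros x _; rewrite chord_scale by lra.
      change (a * chord 1 ((x - c) / a) = a^2 * (/ a * chord 1 (/ a * x + - c / a))).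
      replace (/ a * x + - c / a) with ((x - c) / a) by (field; lra); field; lra. }
  rewrite (RInt_scal (V := R_CompleteNormedModule)).
  2:{ apply (ex_RInt_continuous (V := R_CompleteNormedModule)); intros z _.
      apply (continuous_scal_r (K := R_AbsRing) (V := R_NormedModule)).
      apply (continuous_comp (fun x => / a * x + - c / a) (chord 1)); [|apply continuous_chord].
      apply (ex_derive_continuous (K := R_AbsRing) (V := R_NormedModule)); auto_derive; auto. }
  rewrite (RInt_comp_lin (V := R_CompleteNormedModule)) by apply ex_RInt_chord.
  rewrite RInt_chord_unit; [reflexivity | |];
    apply (Rmult_le_reg_l a); auto; field_simplify; lra.
Qed.

Lemma ex_RInt_lsum (h : pt -> R -> R) (Q : list pt) (A B : R) :
  (forall p, ex_RInt (h p) A B) -> ex_RInt (fun x => lsum (fun p => h p x) Q) A B.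
Proof.
  intros He; induction Q as [|q Q IH]; simpl.
  - apply (ex_RInt_const (V := R_NormedModule)).
  - apply (ex_RInt_plus (V := R_NormedModule) (h q) (fun x => lsum (fun p => h p x) Q)); auto.
Qed.

Lemma RInt_lsum (h : pt -> R -> R) (Q : list pt) (A B : R) :
  (forall p, ex_RInt (h p) A B) ->
  RInt (fun x => lsum (fun p => h p x) Q) A B = lsum (fun p => RInt (h p) A B) Q.
Proof.
  intros He; induction Q as [|q Q IH]; simpl.
  - rewrite RInt_const; change ((B - A) * 0 = 0); ring.
  - rewrite (RInt_plus (V := R_CompleteNormedModule) (h q) (fun x => lsum (fun p => h p x) Q));
      auto using ex_RInt_lsum.
    rewrite IH; reflexivity.
Qed.

(* Area comparison: the disjoint disks B(p, a) all lie inside B(r, rho + a). *)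
Lemma disjoint_disks_packing (a rho : R) (Q : list pt) (r : pt) :
  0 < a -> 0 <= rho -> NoDup Q ->
  (forall p q, In p Q -> In q Q -> p <> q -> 2 * a <= dist2 p q) ->
  (forall p, In p Q -> dist2 p r <= rho) ->
  INR (length Q) * a^2 <= (rho + a)^2.
Proof.
  intros Ha Hrho Hnd Hsep Hin.
  set (A := fst r - (rho + a)); set (B := fst r + (rho + a)).
  assert (Hint : RInt (fun x => lsum (fun p => chord a (x - fst p)) Q) A B
                 <= RInt (fun x => chord (rho + a) (x - fst r)) A B).
  { apply RInt_le.
    - unfold A, B; lra.
    - apply (ex_RInt_lsum (fun p x => chord a (x - fst p))); intros; apply ex_RInt_chord_shift.
    - apply ex_RInt_chord_shift.
    - intros x _; apply sum_chords_le; auto. }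
  rewrite (RInt_lsum (fun p x => chord a (x - fst p))) in Hint
    by (intros; apply ex_RInt_chord_shift).
  rewrite (RInt_chord_shift (rho + a)) in Hint by (unfold A, B; lra).
  rewrite (lsum_ext _ (fun _ => a^2 * half_unit_disk_area)), lsum_const in Hint.
  - pose proof half_unit_disk_area_pos.
    apply (Rmult_le_reg_r half_unit_disk_area); [lra | nra].
  - intros p Hp; pose proof (Rabs_fst_le_dist2 p r); pose proof (Hin p Hp).
    apply RInt_chord_shift; auto; unfold A, B.
    + pose proof (Rle_abs (fst r - fst p)) as Hx; rewrite Rabs_minus_sym in Hx; lra.
    + pose proof (Rle_abs (fst p - fst r)); lra.
Qed.

Lemma sum_n_Sn_R (u : nat -> R) (n : nat) : sum_n u (S n) = sum_n u n + u (S n) :> R.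
Proof. rewrite sum_Sn; reflexivity. Qed.

Lemma sum_n_by_parts (c g : nat -> R) (N : nat) :
  sum_n (fun n => c n * g n) N
  = sum_n (fun n => sum_n c n * (g n - g (S n))) N + sum_n c N * g (S N) :> R.
Proof.
  induction N as [|N IH].
  - rewrite !sum_O; ring.
  - rewrite !sum_n_Sn_R, IH; ring.
Qed.

Lemma is_series_partial_le (u : nat -> R) (s : R) (N : nat) :
  is_series u s -> (forall n, 0 <= u n) -> sum_n u N <= s.
Proof.
  intros Hs Hu; apply (is_lim_seq_incr_compare (sum_n u) s Hs).
  intros n; rewrite sum_n_Sn_R; specialize (Hu (S n)); lra.
Qed.

Section Layers.

Variables (f : R -> R) (a : R).
Hypothesis a_pos : 0 < a.
Hypothesis f_ge0 : forall x, 0 <= f x.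
Hypothesis f_antitone : forall x y, 0 <= x <= y -> f y <= f x.

Definition sample (n : nat) : R := f (INR (S n) * a).

Definition inside (d : R) (n : nat) : bool := Rltb d (INR (S (S n)) * a).

Let layer (d : R) (n : nat) : R := (sample n - sample (S n)) * (if inside d n then 1 else 0).

Lemma sample_antitone (n : nat) : sample (S n) <= sample n.
Proof.
  apply f_antitone; rewrite (S_INR (S n)); pose proof (pos_INR (S n)); nra.
Qed.

Lemma sum_layers_beyond (N : nat) (d : R) :
  INR (S (S N)) * a <= d -> sum_n (layer d) N = 0 :> R.
Proof.
  unfold layer, inside; induction N as [|N IH]; intros Hd.
  - rewrite sum_O; destruct (Rltb_spec d (INR 2 * a)); [lra | ring].
  - rewrite sum_n_Sn_R, IH.
    + destruct (Rltb_spec d (INR (S (S (S N))) * a)); [lra | ring].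
    + rewrite (S_INR (S (S N))) in Hd; lra.
Qed.

(* Layer-cake decomposition of [f d] over the annuli [(n+1) a <= d < (n+2) a]. *)
Lemma layer_cake (N : nat) (d : R) :
  a <= d < INR (S (S N)) * a -> f d <= sum_n (layer d) N + sample (S N).
Proof.
  revert d; induction N as [|N IH]; intros d Hd.
  - rewrite sum_O; unfold layer, inside; destruct (Rltb_spec d (INR 2 * a)); [|lra].
    replace ((sample 0 - sample 1) * 1 + sample 1) with (f (1 * a)) by (unfold sample; simpl; ring).
    apply f_antitone; lra.
  - rewrite sum_n_Sn_R; unfold layer at 2, inside.
    destruct (Rltb_spec d (INR (S (S (S N))) * a)); [|lra].
    destruct (Rlt_or_le d (INR (S (S N)) * a)) as [Hnear|Hfar].
    + pose proof (IH d (conj (proj1 Hd) Hnear)); lra.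
    + rewrite (sum_layers_beyond N d Hfar).
      replace (0 + (sample (S N) - sample (S (S N))) * 1 + sample (S (S N)))
        with (f (INR (S (S N)) * a)) by (unfold sample; ring).
      apply f_antitone; pose proof (pos_INR (S (S N))); split; nra.
Qed.

(* The layer-cake bounds summed over [T], then summation by parts. *)
Lemma lsum_le_layered_sum (c : nat -> R) (T : list pt) (r : pt) (N : nat) :
  (forall t, In t T -> a <= dist2 t r < INR (S (S N)) * a) ->
  (forall n, INR (length (filter (fun t => inside (dist2 t r) n) T)) <= sum_n c n) ->
  lsum (fun t => f (dist2 t r)) T <= sum_n (fun n => c n * sample n) N.
Proof.
  intros Hrange Hcount.
  rewrite sum_n_by_parts.
  apply Rle_trans with (lsum (fun t => sum_n (fun n => layer (dist2 t r) n) N + sample (S N)) T).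
  { apply lsum_le; intros t Ht; apply layer_cake, Hrange, Ht. }
  rewrite lsum_plus, lsum_const, (lsum_sum_n (fun n t => layer (dist2 t r) n)).
  assert (Hall : INR (length T) = INR (length (filter (fun t => inside (dist2 t r) N) T))).
  { rewrite <- lsum_indicator, <- (Rmult_1_r (INR (length T))), <- lsum_const.
    apply lsum_ext; intros t Ht; unfold inside.
    destruct (Rltb_spec (dist2 t r) (INR (S (S N)) * a)); [reflexivity|].
    pose proof (Hrange t Ht); lra. }
  apply Rplus_le_compat.
  - apply (sum_n_m_le _ _ 0 N); intros n; unfold layer.
    rewrite lsum_scal, lsum_indicator, (Rmult_comm (sum_n c n)).
    apply Rmult_le_compat_l; [pose proof (sample_antitone n); lra | apply Hcount].
  - rewrite Hall; apply Rmult_le_compat_r; [apply f_ge0 | apply Hcount].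
Qed.

End Layers.

Lemma sum_n_odd_weights (n : nat) :
  sum_n (fun k => 6 * INR (S k) + 3) n = 3 * INR (S n) ^ 2 + 6 * INR (S n) :> R.
Proof.
  induction n as [|n IH].
  - rewrite sum_O; simpl; ring.
  - rewrite sum_n_Sn_R, IH, (S_INR (S n)); ring.
Qed.

Lemma exists_nat_bound_list (g : pt -> R) (l : list pt) (a : R) :
  0 < a -> exists N, forall p, In p l -> g p < INR N * a.
Proof.
  intros Ha; induction l as [|p l [N1 HN1]].
  - exists 0%nat; intros p [].
  - destruct (INR_unbounded (g p / a)) as [N0 HN0].
    exists (Nat.max N0 N1); intros q [->|Hq].
    + pose proof (le_INR _ _ (Nat.le_max_l N0 N1)).
      apply (Rmult_lt_compat_r a) in HN0; [|lra].
      replace (g q / a * a) with (g q) in HN0 by (field; lra); nra.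
    + pose proof (le_INR _ _ (Nat.le_max_r N0 N1)); pose proof (HN1 q Hq); nra.
Qed.

Lemma eta_pow_pos (alpha d : R) : 0 < eta_pow alpha d.
Proof. apply Rinv_0_lt_compat, exp_pos. Qed.

Lemma eta_pow_antitone (alpha x y : R) :
  0 < alpha -> 0 <= x <= y -> eta_pow alpha y <= eta_pow alpha x.
Proof.
  intros Hal Hxy; apply Rinv_le_contravar; [apply exp_pos|].
  apply Rle_Rpower_l; lra.
Qed.

Lemma DC_interferer_far (C D : R) (t r : pt) (T : list pt) (t' : pt) :
  0 <= D -> DC C D t r T -> In t' T -> C * (1 + D / 2) <= dist2 t' r.
Proof.
  intros HD (_ & Ht & Htr & Hsep) Ht'.
  assert (t' <> t) by (intros ->; contradiction).
  pose proof (Hsep t' t (in_cons t t' T Ht') (in_eq t T) H).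
  pose proof (dist2_triangle t' r t); rewrite (dist2_sym r t) in *.
  assert (0 <= dist2 t r) by apply sqrt_pos.
  nra.
Qed.

(* The separation C (2 + D) makes the disks of radius C (1 + D/2) around t and the
   interferers disjoint. *)
Lemma DC_count_inside (C D : R) (t r : pt) (T : list pt) (n : nat) :
  0 < C -> 0 <= D -> DC C D t r T ->
  INR (length (filter (fun t' => inside (C * (1 + D / 2)) (dist2 t' r) n) T))
    <= 3 * INR (S n) ^ 2 + 6 * INR (S n).
Proof.
  intros HC HD HDC; pose proof HDC as (Hnd & Ht & Htr & Hsep).
  set (a := C * (1 + D / 2)); set (k := INR (S n)).
  assert (Ha : C <= a) by (unfold a; nra).
  assert (Hk : 1 <= k) by (unfold k; rewrite S_INR; pose proof (pos_INR n); lra).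
  set (Q := filter (fun t' => inside a (dist2 t' r) n) T).
  pose proof (disjoint_disks_packing a ((k + 1) * a) (t :: Q) r) as Hpack.
  simpl length in Hpack; rewrite S_INR in Hpack; fold Q in Hpack |- *.
  assert (Ha0 : 0 < a) by lra.
  assert (INR (length Q) + 1 <= (k + 2)^2); [|nra].
  apply (Rmult_le_reg_r (a^2)); [nra|].
  replace ((k + 2)^2 * a^2) with (((k + 1) * a + a)^2) by ring.
  apply Hpack; [lra | nra | | |].
  - unfold Q; constructor; [rewrite filter_In; tauto | apply NoDup_filter, Hnd].
  - assert (HQT : forall p, In p (t :: Q) -> In p (t :: T)).
    { intros p [->|Hp]; [apply in_eq | apply in_cons].
      unfold Q in Hp; apply filter_In in Hp; tauto. }
    intros p q Hp Hq Hpq; replace (2 * a) with (C * (2 + D)) by (unfold a; field).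
    apply Hsep; auto.
  - intros p [<-|Hp]; [nra|].
    apply filter_In in Hp as [_ Hin]; unfold inside, k in *.
    destruct (Rltb_spec (dist2 p r) (INR (S (S n)) * a)); [|discriminate].
    rewrite (S_INR (S n)) in *; lra.
Qed.

Lemma DC_interference_le_series (alpha C D s : R) (t r : pt) (T : list pt) :
  0 < alpha -> 0 < C -> 0 < D ->
  is_series (fun n : nat =>
     let k := INR (S n) in (6 * k + 3) / Rpower (1 + k * C * (1 + D / 2)) alpha) s ->
  DC C D t r T -> lsum (fun t' => eta_pow alpha (dist2 t' r)) T <= s.
Proof.
  intros Hal HC HD Hs HDC.
  set (a := C * (1 + D / 2)).
  assert (Ha : 0 < a) by (unfold a; nra).
  destruct (exists_nat_bound_list (fun t' => dist2 t' r) T a Ha) as [N HN].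
  apply Rle_trans with (sum_n (fun n => (6 * INR (S n) + 3) * sample (eta_pow alpha) a n) N).
  - apply lsum_le_layered_sum; auto.
    + intros; left; apply eta_pow_pos.
    + intros x y; apply eta_pow_antitone, Hal.
    + intros t' Ht'; split; [apply (DC_interferer_far C D t r T); auto; lra|].
      pose proof (HN t' Ht'); pose proof (le_INR N (S (S N)) ltac:(lia)); nra.
    + intros n; rewrite sum_n_odd_weights; apply (DC_count_inside C D t); auto; lra.
  - rewrite (sum_n_ext _ (fun n : nat =>
       let k := INR (S n) in (6 * k + 3) / Rpower (1 + k * C * (1 + D / 2)) alpha)).
    + apply (is_series_partial_le _ s N Hs); intros n.
      pose proof (pos_INR (S n)); apply Rdiv_le_0_compat; [lra | apply exp_pos].
    + intros n; unfold sample, eta_pow, a; cbv zeta; rewrite Rmult_assoc; reflexivity.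
Qed.

(* The power [P := beta No / (e - beta I)] makes the SINR bound an equality in the worst case. *)
Lemma ensures_SINR_of_bounds (beta No : R) (eta : R -> R) (C D e I : R) :
  0 < No -> 0 < beta -> beta * I < e -> (forall x, 0 <= eta x) ->
  (forall t r T, DC C D t r T -> e <= eta (dist2 t r)) ->
  (forall t r T, DC C D t r T -> lsum (fun t' => eta (dist2 t' r)) T <= I) ->
  ensures_SINR beta No eta C D.
Proof.
  intros HNo Hbeta HI Heta Hsignal Hinterf.
  set (P := beta * No / (e - beta * I)).
  assert (HP : 0 < P) by (apply Rdiv_lt_0_compat; nra).
  assert (HPe : P * e = beta * No + P * (beta * I)) by (unfold P; field; lra).
  exists P; split; [exact HP|]; intros t r T HDC.
  specialize (Hsignal t r T HDC); specialize (Hinterf t r T HDC).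
  assert (Hsum : 0 <= lsum (fun t' => eta (dist2 t' r)) T) by (apply lsum_ge0; auto).
  unfold SINR; rewrite lsum_scal.
  apply Rle_div_r; [nra|].
  assert (P * (beta * lsum (fun t' => eta (dist2 t' r)) T) <= P * (beta * I)) by
    (apply Rmult_le_compat_l; nra).
  assert (P * e <= P * eta (dist2 t r)) by (apply Rmult_le_compat_l; lra).
  nra.
Qed.

Theorem corollary1 (No alpha beta C D : R) :
  0 < No -> 0 < alpha -> 0 < beta -> 0 < C -> 0 < D ->
  (exists s : R,
     is_series (fun n : nat =>
        let k := INR (S n) in
        (6 * k + 3) / Rpower (1 + k * C * (1 + D / 2)) alpha) s /\
     Rpower (1 + C) alpha * s < / beta) ->
  ensures_SINR beta No (eta_pow alpha) C D.
Proof.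
  intros HNo Hal Hbeta HC HD [s [Hs Hsum]].
  apply (ensures_SINR_of_bounds _ _ _ _ _ (eta_pow alpha C) s HNo Hbeta).
  - assert (Hq : 0 < Rpower (1 + C) alpha) by apply exp_pos.
    unfold eta_pow; apply (Rmult_lt_reg_l (Rpower (1 + C) alpha / beta)).
    + apply Rdiv_lt_0_compat; lra.
    + replace (Rpower (1 + C) alpha / beta * (beta * s)) with (Rpower (1 + C) alpha * s)
        by (field; lra).
      replace (Rpower (1 + C) alpha / beta * / Rpower (1 + C) alpha) with (/ beta)
        by (field; lra).
      exact Hsum.
  - intros x; left; apply eta_pow_pos.
  - intros t r T (_ & _ & Htr & _); apply eta_pow_antitone; [exact Hal|].
    split; [apply sqrt_pos | exact Htr].
  - intros t r T HDC; apply (DC_interference_le_series alpha C D s t); auto.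
Qed.
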